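(* Let $p\ge5$ be a prime. Then $H^1(\mathrm{Sym}(p),X_{\{2\}})=0$, and $H^1(\mathrm{Sym}(p),D_{\{q\}})=0$ for every odd prime $q$.
   Context: $\mathrm{Sym}(p)$ is identified with the group of $p\times p$ permutation matrices (via $\alpha\mapsto[\delta_{i\alpha,j}]_{i,j}$) and acts by conjugation on the group $\mathrm{D}(p,\mathbb{C})$ of invertible diagonal matrices. $D$ is the torsion subgroup of $\mathrm{D}(p,\mathbb{C})$ and $D_{\{q\}}$ its subgroup of elements of $q$-power order; $X=\mathrm{SL}(p,\mathbb{C})\cap\mathrm{D}(p,\mathbb{C})$ and $X_{\{2\}}$ is its subgroup of elements of $2$-power order. These are regarded as $\mathrm{Sym}(p)$-modules. *)

(* Complex numbers are modelled by algC (algebraic complex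
   numbers): every torsion element of C^* is a root of unity, hence lies in
   algC, so the torsion modules D_{q}, X_{2} are literally the same. *)
From mathcomp Require Import all_boot all_order all_algebra all_fingroup all_field.
Set Implicit Arguments. Unset Strict Implicit. Unset Printing Implicit Defensive.
Import GRing.Theory.
Local Open Scope ring_scope.

(* Sym(p) = 'S_p acts on p x p matrices via the permutation matrices
   perm_mx s (entry (i,j) = [s i == j] = delta_{i alpha, j}), by (right)
   conjugation  x^s = P_s^{-1} x P_s. *)
Definition conjP (p : nat) (s : 'S_p) (x : 'M[algC]_p) : 'M[algC]_p :=
  invmx (perm_mx s) *m x *m perm_mx s.

Definition Dq (p q : nat) (x : 'M[algC]_p) : Prop :=
  is_diag_mx x /\ exists k : nat, forall i : 'I_p, x i i ^+ (q ^ k) = 1.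

Definition X2 (p : nat) (x : 'M[algC]_p) : Prop :=
  is_diag_mx x /\ \det x = 1 /\ exists k : nat, forall i : 'I_p, x i i ^+ (2 ^ k) = 1.

Definition cocycle (p : nat) (M : 'M[algC]_p -> Prop) (f : 'S_p -> 'M[algC]_p) : Prop :=
  (forall g, M (f g)) /\ forall g h, f (g * h)%g = conjP h (f g) *m f h.

Definition coboundary (p : nat) (M : 'M[algC]_p -> Prop) (f : 'S_p -> 'M[algC]_p) : Prop :=
  exists2 m, M m & forall g, f g = invmx m *m conjP g m.

Definition H1_trivial (p : nat) (M : 'M[algC]_p -> Prop) : Prop :=
  forall f : 'S_p -> 'M[algC]_p, cocycle M f -> coboundary M f.

(* The diagonal entries of a cocycle f form a cocycle F g i := f g i i for the
   permutation action of Sym(p) on (C^* )^p.  This module is induced from the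
   stabiliser of a point z, on which g |-> F g z is a homomorphism; if it kills
   the transpositions, then F is the coboundary of m j := F (tperm z j) z.
   For q odd, F (tperm a b) z has order dividing both 2 and a power of q, so it
   is 1.  For 2-power orders, the homomorphism is eps^sign for a sign eps; the
   cocycle twisted by eps^sign is then a coboundary, so the product of its
   coordinates is 1, while det f = 1 makes that product eps^p: hence eps = 1 as
   p is odd.  Finally m is rescaled by a 2-power root of unity c with
   c^p = (prod m)^-1, which exists since p is odd, to land in SL(p). *)

From mathcomp Require Import all_boot all_order all_algebra all_fingroup all_field.
Set Implicit Arguments. Unset Strict Implicit. Unset Printing Implicit Defensive.
Import GRing.Theory.
Local Open Scope ring_scope.

Definition perm_cocycle (T : finType) (R : pzRingType) (F : {perm T} -> T -> R) :=
  forall g h i, F (g * h)%g i = F g ((h^-1)%g i) * F h i.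

Section PermCocycle.

Variables (T : finType) (R : idomainType) (F : {perm T} -> T -> R).
Hypotheses (F_coc : perm_cocycle F) (F_neq0 : forall g i, F g i != 0).
Implicit Types (g h : {perm T}) (a b c d i j x y : T).

Lemma perm_cocycle1 i : F 1%g i = 1.
Proof.
have := F_coc 1%g 1%g i; rewrite mulg1 invg1 perm1 => F11.
by apply/(mulIf (F_neq0 1%g i)); rewrite mul1r -F11.
Qed.

Lemma perm_cocycle_tpermK a b i : F (tperm a b) (tperm a b i) * F (tperm a b) i = 1.
Proof.
by rewrite -[in X in F _ X]tpermV -F_coc tperm2 perm_cocycle1.
Qed.

Variable z : T.

Lemma perm_cocycleM_fix g h : h z = z -> F (g * h)%g z = F g z * F h z.
Proof. by move=> hz; rewrite F_coc -{1}hz permK. Qed.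

Lemma perm_cocycleJ_fix g h : g z = z -> h z = z -> F (g ^ h)%g z = F g z.
Proof.
move=> gz hz; have hVz : (h^-1)%g z = z by rewrite -{1}hz permK.
rewrite /conjg !perm_cocycleM_fix ?permM ?gz //.
by rewrite mulrCA -perm_cocycleM_fix // mulVg perm_cocycle1 mulr1.
Qed.

Lemma perm_cocycle_tperm_sqr_fix a b :
  a != z -> b != z -> F (tperm a b) z ^+ 2 = 1.
Proof.
move=> az bz; have tz : tperm a b z = z by rewrite tpermD // eq_sym.
by rewrite expr2 -perm_cocycleM_fix // tperm2 perm_cocycle1.
Qed.

Lemma perm_cocycle_tperm_fix_swap x y c : x != z -> y != z -> c != z ->
  x != c -> y != c -> F (tperm y c) z = F (tperm x c) z.
Proof.
move=> xz yz cz xc yc; rewrite -(@tpermJ_tperm _ x y c) //.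
by apply: perm_cocycleJ_fix; rewrite tpermD // eq_sym.
Qed.

Lemma perm_cocycle_tperm_fix_const a b c d :
    a != z -> b != z -> c != z -> d != z -> a != b -> c != d ->
  F (tperm a b) z = F (tperm c d) z.
Proof.
move=> az bz cz dz ab cd; have [bc|bc] := eqVneq b c.
  rewrite -{}bc in cz cd *; rewrite (tpermC b d).
  by apply: perm_cocycle_tperm_fix_swap; rewrite // eq_sym.
have cb : c != b by rewrite eq_sym.
have dc : d != c by rewrite eq_sym.
rewrite (@perm_cocycle_tperm_fix_swap c) // (tpermC c b) (tpermC c d).
exact: perm_cocycle_tperm_fix_swap.
Qed.

Section Coboundary.

Hypothesis F_tperm_fix : forall a b, a != z -> b != z -> F (tperm a b) z = 1.

Let m j := F (tperm z j) z.
Let cobounded g := forall i, F g i * m i = m ((g^-1)%g i).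

Let m_base : m z = 1. Proof. by rewrite /m tperm1 perm_cocycle1. Qed.

Let cobounded1 : cobounded 1%g.
Proof. by move=> i; rewrite perm_cocycle1 mul1r invg1 perm1. Qed.

Let coboundedM g h : cobounded g -> cobounded h -> cobounded (g * h)%g.
Proof. by move=> Cg Ch i; rewrite F_coc -mulrA Ch Cg invMg permM. Qed.

Let cobounded_tperm_base b : cobounded (tperm z b).
Proof.
have [->|bz] := eqVneq b z; first by rewrite tperm1; exact: cobounded1.
move=> i; rewrite tpermV; have [->|iz] := eqVneq i z.
  by rewrite m_base mulr1 tpermL.
have [->|ib] := eqVneq i b.
  by rewrite tpermR m_base /m mulrC -[X in F _ X * _](tpermR z b) perm_cocycle_tpermK.
have zb : z != b by rewrite eq_sym.
have zi : z != i by rewrite eq_sym.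
have bi : b != i by rewrite eq_sym.
rewrite tpermD //; suff -> : F (tperm z b) i = 1 by rewrite mul1r.
(* tperm z b is the conjugate of tperm i b by tperm i z; evaluate the cocycle at i. *)
rewrite -(tpermJ_tperm ib zb) /conjg !F_coc invMg permM !tpermV tpermL tpermD //.
by rewrite (F_tperm_fix iz bz) mul1r -[X in F _ X * _](tpermL i z) perm_cocycle_tpermK.
Qed.

Let cobounded_tperm a b : cobounded (tperm a b).
Proof.
have [->|az] := eqVneq a z; first exact: cobounded_tperm_base.
have [->|bz] := eqVneq b z; first by rewrite tpermC; exact: cobounded_tperm_base.
have [->|ab] := eqVneq a b; first by rewrite tperm1; exact: cobounded1.
have zb : z != b by rewrite eq_sym.
rewrite -(tpermJ_tperm zb ab) /conjg tpermV.
by do 2?apply: coboundedM; apply: cobounded_tperm_base.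
Qed.

Lemma perm_cocycle_coboundary g i :
  F g i * F (tperm z i) z = F (tperm z ((g^-1)%g i)) z.
Proof.
have [ts -> _] := prod_tpermP g; move: i; elim: ts => [|t ts IH].
  by rewrite big_nil; exact: cobounded1.
by rewrite big_cons; apply: coboundedM => //; apply: cobounded_tperm.
Qed.

End Coboundary.
End PermCocycle.

Lemma sqr1_expr_odd (R : pzRingType) (x : R) n : x ^+ 2 = 1 -> x ^+ n = x ^+ odd n.
Proof.
by move=> x2; rewrite -[in LHS](odd_double_half n) exprD -mul2n exprM x2 expr1n mulr1.
Qed.

Lemma perm_cocycle_twist (T : finType) (R : comPzRingType) (F : {perm T} -> T -> R)
    (chi : {perm T} -> R) :
  perm_cocycle F -> {morph chi : g h / (g * h)%g >-> g * h} ->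
  perm_cocycle (fun g i => chi g * F g i).
Proof. by move=> F_coc chiM g h i; rewrite F_coc chiM mulrACA. Qed.

Lemma prod_coboundary_eq1 (T : finType) (R : idomainType) (g : {perm T}) (u m : T -> R) :
  (forall i, m i != 0) -> (forall i, u i * m i = m ((g^-1)%g i)) -> \prod_i u i = 1.
Proof.
move=> m_neq0 um; have Pm_neq0 : \prod_i m i != 0 by apply/prodf_neq0.
apply: (mulIf Pm_neq0); rewrite mul1r -big_split (eq_bigr _ (fun i _ => um i)) /=.
by rewrite [RHS](reindex_inj (@perm_inj _ g^-1)).
Qed.

Lemma perm_cocycle_tperm_fix_eq1 (T : finType) (R : idomainType) (F : {perm T} -> T -> R)
    (z a b : T) :
  perm_cocycle F -> (forall g i, F g i != 0) -> odd #|T| -> a != z -> b != z ->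
  \prod_i F (tperm a b) i = 1 -> F (tperm a b) z = 1.
Proof.
move=> F_coc F_neq0 T_odd az bz prodF.
have [<-|ab] := eqVneq a b; first by rewrite tperm1 perm_cocycle1.
set eps := F (tperm a b) z.
have eps2 : eps ^+ 2 = 1 by apply: perm_cocycle_tperm_sqr_fix.
(* Twisting by the character eps^sign kills the values at transpositions avoiding z. *)
pose G g i := eps ^+ odd_perm g * F g i.
have G_coc : perm_cocycle G.
  apply: perm_cocycle_twist => // g h.
  by rewrite odd_permM -exprD (sqr1_expr_odd (odd_perm g + odd_perm h)) // oddD !oddb.
have G_neq0 g i : G g i != 0 by rewrite mulf_neq0 // expf_neq0 // (F_neq0 (tperm a b)).
have G_fix c d : c != z -> d != z -> G (tperm c d) z = 1.
  move=> cz dz; have [<-|cd] := eqVneq c d.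
    by rewrite /G tperm1 odd_perm1 mul1r perm_cocycle1.
  rewrite /G odd_tperm cd (perm_cocycle_tperm_fix_const F_coc F_neq0 cz dz az bz cd ab).
  by rewrite -expr2.
have : \prod_i G (tperm a b) i = 1.
  apply: (prod_coboundary_eq1 (m := fun j => G (tperm z j) z)) => // i.
  exact: perm_cocycle_coboundary.
rewrite big_split /= prodF mulr1 prodr_const odd_tperm ab expr1.
by rewrite (sqr1_expr_odd #|T|) // T_odd.
Qed.

Lemma uniform_unity_root_exponent (R : pzRingType) (I : finType) (x : I -> R) n :
  (forall i, exists k, x i ^+ (n ^ k) = 1) -> exists k, forall i, x i ^+ (n ^ k) = 1.
Proof.
case/fin_all_exists => k xk; exists (\sum_i k i)%N => i.
by rewrite (bigD1 i) //= expnD exprM xk expr1n.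
Qed.

Lemma unity_root_neq0 (R : nzRingType) (x : R) n : (0 < n)%N -> x ^+ n = 1 -> x != 0.
Proof.
move=> n_gt0 xn; apply/eqP => x0; move: xn; rewrite x0 expr0n gtn_eqF //.
by move/eqP; rewrite eq_sym oner_eq0.
Qed.

Lemma coprime_unity_root_solve (R : pzRingType) (x : R) N n :
  (0 < N)%N -> coprime N n -> x ^+ N = 1 -> exists2 c : R, c ^+ N = 1 & c ^+ n * x = 1.
Proof.
move=> N_gt0 coNn xN; have [a _] := Bezoutl n N_gt0; rewrite (eqP coNn) => /dvdnP[w Ew].
exists (x ^+ a); first by rewrite -exprM mulnC exprM xN expr1n.
by rewrite -exprM -exprSr -add1n Ew mulnC exprM xN expr1n.
Qed.

Lemma invmx_perm_mx n (s : 'S_n) : invmx (perm_mx s : 'M[algC]_n) = perm_mx s^-1.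
Proof.
by rewrite -[LHS]mulmx1 -perm_mx1 -(mulgV s) perm_mxM mulmxA mulVmx ?unitmx_perm ?mul1mx.
Qed.

Lemma conjPE p (g : 'S_p) (x : 'M[algC]_p) i j :
  conjP g x i j = x ((g^-1)%g i) ((g^-1)%g j).
Proof.
by rewrite /conjP invmx_perm_mx -row_permE -[g in perm_mx g]invgK -col_permE !mxE.
Qed.

Lemma diag_cocycle_perm_cocycle p (M : 'M[algC]_p -> Prop) (f : 'S_p -> 'M[algC]_p) :
  (forall x, M x -> is_diag_mx x) -> cocycle M f -> perm_cocycle (fun g i => f g i i).
Proof.
move=> M_diag [fM f_coc] g h i.
rewrite f_coc mxE (bigD1 i) //= conjPE big1 ?addr0 // => j ji.
by move/is_diag_mxP: (M_diag _ (fM h)) => ->; rewrite ?mulr0.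
Qed.

Lemma diag_coboundary p (x : 'M[algC]_p) (g : 'S_p) (d : 'I_p -> algC) :
  is_diag_mx x -> (forall i, d i != 0) -> (forall i, x i i * d i = d ((g^-1)%g i)) ->
  x = invmx (diag_mx (\row_j d j)) *m conjP g (diag_mx (\row_j d j)).
Proof.
move=> x_diag d_neq0 xd; set D := diag_mx _.
have D_unit : D \in unitmx.
  by rewrite unitmxE det_diag unitfE; apply/prodf_neq0 => i _; rewrite mxE.
suff <- : D *m x = conjP g D by rewrite mulKmx.
apply/matrixP => i j; rewrite mul_diag_mx conjPE !mxE.
have [<-|ij] := eqVneq i j; first by rewrite eqxx mulr1n mulrC.
rewrite (inj_eq perm_inj) (negPf ij) mulr0n.
by move/is_diag_mxP: x_diag => ->; rewrite ?mulr0.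
Qed.

Lemma Dq_diag p q (x : 'M[algC]_p) : Dq q x -> is_diag_mx x.
Proof. by case. Qed.

Lemma Dq_entry_neq0 p q (x : 'M[algC]_p) i : (0 < q)%N -> Dq q x -> x i i != 0.
Proof. by move=> q_gt0 [_ [k xk]]; apply: unity_root_neq0 (xk i); rewrite expn_gt0 q_gt0. Qed.

Lemma X2_Dq p (x : 'M[algC]_p) : X2 x -> Dq 2 x.
Proof. by case=> x_diag [_ x2]. Qed.

Lemma Dq_cocycle_coboundary p q (f : 'S_p -> 'M[algC]_p) (z : 'I_p) (c : algC) g :
    (0 < q)%N -> cocycle (@Dq p q) f -> c != 0 ->
    (forall a b, a != z -> b != z -> f (tperm a b) z z = 1) ->
  f g = invmx (diag_mx (\row_j (c * f (tperm z j) z z)))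
          *m conjP g (diag_mx (\row_j (c * f (tperm z j) z z))).
Proof.
move=> q_gt0 f_coc c_neq0 f_fix; have [fD _] := f_coc.
have F_coc := diag_cocycle_perm_cocycle (@Dq_diag p q) f_coc.
have F_neq0 h i : f h i i != 0 by apply: Dq_entry_neq0 (fD h).
apply: diag_coboundary => [|i|i]; first by case: (fD g).
- by rewrite mulf_neq0.
- by rewrite mulrCA (perm_cocycle_coboundary F_coc F_neq0 f_fix).
Qed.

Lemma H1_Dq_trivial p q : (0 < p)%N -> prime q -> odd q -> H1_trivial (@Dq p q).
Proof.
move=> p_gt0 q_prime q_odd f f_coc; have [fD _] := f_coc.
have q_gt0 := prime_gt0 q_prime.
have F_coc := diag_cocycle_perm_cocycle (@Dq_diag p q) f_coc.
have F_neq0 g i : f g i i != 0 by apply: Dq_entry_neq0 (fD g).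
pose z := Ordinal p_gt0.
have f_fix a b : a != z -> b != z -> f (tperm a b) z z = 1.
  move=> az bz; have [_ [k fk]] := fD (tperm a b).
  have := sqr1_expr_odd (q ^ k) (perm_cocycle_tperm_sqr_fix F_coc F_neq0 az bz).
  by rewrite fk oddX q_odd orbT expr1 => <-.
have [K fK] : exists K, forall j, f (tperm z j) z z ^+ (q ^ K) = 1.
  apply: uniform_unity_root_exponent => j.
  by have [_ [k fk]] := fD (tperm z j); exists k; exact: fk.
exists (diag_mx (\row_j (1 * f (tperm z j) z z))).
  by split; [exact: diag_mx_is_diag | exists K => i; rewrite !mxE eqxx mulr1n mul1r fK].
by move=> g; apply: Dq_cocycle_coboundary f_coc (oner_neq0 _) f_fix.
Qed.

Lemma H1_X2_trivial p : odd p -> H1_trivial (@X2 p).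
Proof.
move=> p_odd f f_coc; have [fX _] := f_coc.
have f_coc2 : cocycle (@Dq p 2) f by split=> [g|]; [exact: X2_Dq | case: f_coc].
have F_coc := diag_cocycle_perm_cocycle (@Dq_diag p 2) f_coc2.
have F_neq0 g i : f g i i != 0 by apply: Dq_entry_neq0 (X2_Dq (fX g)).
pose z := Ordinal (odd_gt0 p_odd).
have f_fix a b : a != z -> b != z -> f (tperm a b) z z = 1.
  move=> az bz; apply: (perm_cocycle_tperm_fix_eq1 F_coc) => //; first by rewrite card_ord.
  have [f_diag [f_det _]] := fX (tperm a b).
  by rewrite -det_trig ?is_diag_mx_is_trig.
pose d j := f (tperm z j) z z.
have [K dK] : exists K, forall j, d j ^+ (2 ^ K) = 1.
  apply: uniform_unity_root_exponent => j.
  by have [_ [_ [k fk]]] := fX (tperm z j); exists k; exact: fk.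
have [c cK c_det] : exists2 c : algC, c ^+ (2 ^ K) = 1 & c ^+ p * \prod_j d j = 1.
  apply: coprime_unity_root_solve; rewrite ?expn_gt0 ?coprimeXl ?coprime2n //.
  by rewrite -prodrXl; apply: big1 => j _; rewrite dK.
exists (diag_mx (\row_j (c * d j))).
  split; first exact: diag_mx_is_diag.
  split; last by exists K => i; rewrite !mxE eqxx mulr1n exprMn cK dK mulr1.
  rewrite det_diag (eq_bigr (fun j => c * d j)) => [|j _]; last by rewrite mxE.
  by rewrite big_split prodr_const card_ord.
move=> g; apply: Dq_cocycle_coboundary f_coc2 _ f_fix => //.
by apply: unity_root_neq0 cK; rewrite expn_gt0.
Qed.

Local Close Scope ring_scope.

Theorem lemma7p3 (p : nat) (hp : prime p) (hp5 : 5 <= p) :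
  @H1_trivial p (@X2 p) /\
  (forall q : nat, prime q -> odd q -> @H1_trivial p (@Dq p q)).
Proof.
have [p2|p_odd] := even_prime hp; first by rewrite p2 in hp5.
split; first exact: H1_X2_trivial.
by move=> q q_prime q_odd; apply: H1_Dq_trivial; rewrite ?prime_gt0.
Qed.
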